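(* Let $f:\mathbb{R}^n\to(-\infty,+\infty]$ be proper and lower semicontinuous with $\bar x\in\operatorname{dom}f$, and let $g:\mathbb{R}^n\to(-\infty,+\infty]$ be convex and continuously differentiable on a neighborhood of $\bar x$. If $f$ is variationally convex at $\bar x$ for $\bar v\in\partial f(\bar x)$, then $f+g$ is variationally convex at $\bar x$ for $\bar v+\nabla g(\bar x)\in\partial(f+g)(\bar x)$.
   Context: $\partial$ is the limiting (Mordukhovich) subdifferential. A lsc $h$ is variationally convex at $\bar x$ for $\bar v\in\partial h(\bar x)$ if for some convex neighborhood $U\times V$ of $(\bar x,\bar v)$ there are a lsc convex function $\varphi\le h$ on $U$ and $\varepsilon>0$ such that $[U_\varepsilon\times V]\cap\operatorname{gph}\partial h=[U\times V]\cap\operatorname{gph}\partial\varphi$ and $h(x)=\varphi(x)$ at the common elements $(x,v)$, where $U_\varepsilon=\{x\in U:h(x)<h(\bar x)+\varepsilon\}$. *)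

From HB Require Import structures.
From mathcomp Require Import all_boot all_order all_algebra.
From mathcomp Require Import all_classical all_reals all_analysis.
Set Implicit Arguments. Unset Strict Implicit. Unset Printing Implicit Defensive.
Import Order.TTheory GRing.Theory Num.Theory.
Import numFieldNormedType.Exports.
Local Open Scope classical_set_scope.
Local Open Scope ring_scope.

Section VarConv.
Variables (R : realType) (n : nat).
Notation V := 'rV[R]_n.

Definition inner (u v : V) : R := \sum_(i < n) u 0 i * v 0 i.

Definition proper_fun (h : V -> \bar R) : Prop :=
  (forall x, h x != -oo%E) /\ exists x, h x \is a fin_num.

Definition lsc (h : V -> \bar R) : Prop :=
  forall x (a : R), (a%:E < h x)%E -> \forall y \near x, (a%:E < h y)%E.

Definition convex_fun (h : V -> \bar R) : Prop :=
  (forall x, h x != -oo%E) /\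
  forall (x y : V) (t : R), 0 < t < 1 ->
    (h (t *: x + (1 - t) *: y)%R <= t%:E * h x + (1 - t)%:E * h y)%E.

Definition convex_set (U : set V) : Prop :=
  forall (x y : V) (t : R), U x -> U y -> 0 <= t <= 1 -> U (t *: x + (1 - t) *: y).

Definition frechet_subgrad (h : V -> \bar R) (x v : V) : Prop :=
  h x \is a fin_num /\
  forall eps : R, 0 < eps -> \forall y \near x,
    (h x + (inner v (y - x) - eps * `|y - x|)%:E <= h y)%E.

Definition lim_subgrad (h : V -> \bar R) (x v : V) : Prop :=
  h x \is a fin_num /\
  exists (xs vs : nat -> V),
    xs @ \oo --> x /\ (fun k => h (xs k)) @ \oo --> h x /\
    vs @ \oo --> v /\ forall k, frechet_subgrad h (xs k) (vs k).

Definition C1_on_with_grad (U : set V) (g : V -> \bar R) (G : V -> V) : Prop :=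
  (forall x, U x -> g x \is a fin_num) /\
  (forall x, U x -> forall eps : R, 0 < eps -> \forall y \near x,
     `|fine (g y) - fine (g x) - inner (G x) (y - x)| <= eps * `|y - x|) /\
  (forall x, U x -> {for x, continuous G}).

Definition var_convex (h : V -> \bar R) (xbar vbar : V) : Prop :=
  lim_subgrad h xbar vbar /\
  exists (U W : set V) (phi : V -> \bar R) (eps : R),
    convex_set U /\ convex_set W /\ nbhs xbar U /\ nbhs vbar W /\
    lsc phi /\ convex_fun phi /\ (forall x, U x -> (phi x <= h x)%E) /\
    0 < eps /\
    (forall x v,
       (U x /\ (h x < h xbar + eps%:E)%E /\ W v /\ lim_subgrad h x v) <->
       (U x /\ W v /\ lim_subgrad phi x v)) /\
    (forall x v, U x -> W v -> lim_subgrad phi x v -> h x = phi x).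

End VarConv.

(* Near x̄, adding the C¹ function g shifts limiting subgradients by its
   gradient: ∂(f+g)(x) = ∂f(x) + ∇g(x), since Fréchet subgradients transfer
   along the first-order expansion of g and ∇g is continuous.  Hence the convex
   localization φ of f yields the localization φ + g of f + g, made globally
   convex and lsc by setting it to +∞ outside a small closed ball.  For the
   f-attentive level condition, continuity of g turns
   (f+g)(x) < (f+g)(x̄) + ε/2 into f(x) < f(x̄) + ε; conversely the subgradient
   inequality of the convex φ at x, with subgradients w bounded near v̄, gives
   φ(x) ≤ φ(x̄) + <w, x - x̄> ≤ φ(x̄) + ε/4 on a small enough ball. *)

From Pilot Require Import Defs.
From HB Require Import structures.
From mathcomp Require Import all_boot all_order all_algebra.
From mathcomp Require Import all_classical all_reals all_analysis.
From mathcomp Require Import ring lra.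
Set Implicit Arguments. Unset Strict Implicit. Unset Printing Implicit Defensive.
Import Order.TTheory GRing.Theory Num.Theory.
Import numFieldNormedType.Exports.
Local Open Scope classical_set_scope.
Local Open Scope ring_scope.

Section Subgradients.
Variables (R : realType) (n : nat).
Notation V := 'rV[R]_n.

Lemma normr_mx_entry_le (u : V) (i : 'I_n) : `|u 0 i| <= `|u|.
Proof.
rewrite [leRHS]/Num.norm /= mx_normrE; apply/bigmax_geP; right => /=.
by exists (0, i).
Qed.

Lemma normr_inner_le (u v : V) : `|inner u v| <= n%:R * (`|u| * `|v|).
Proof.
rewrite /inner; apply: le_trans (ler_norm_sum _ _ _) _.
rewrite -[n in n%:R]card_ord mulr_natl -sumr_const.
apply: ler_sum => i _; rewrite normrM.
by apply: ler_pM => //; exact: normr_mx_entry_le.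
Qed.

Lemma innerDl (a b c : V) : inner (a + b) c = inner a c + inner b c.
Proof. by rewrite /inner -big_split; apply: eq_bigr => i _; rewrite !mxE mulrDl. Qed.

Lemma innerNl (a c : V) : inner (- a) c = - inner a c.
Proof. by rewrite /inner -sumrN; apply: eq_bigr => i _; rewrite !mxE mulNr. Qed.

Lemma innerZr (a c : V) (t : R) : inner a (t *: c) = t * inner a c.
Proof. by rewrite /inner mulr_sumr; apply: eq_bigr => i _; rewrite !mxE mulrCA. Qed.

Lemma cvg_inner {T} (F : set_system T) {FF : Filter F} (u w : T -> V) (a b : V) :
  u @ F --> a -> w @ F --> b -> (fun t => inner (u t) (w t)) @ F --> inner a b.
Proof.
move=> ua wb; apply: (@cvg_big _ _ +%R 0 xpredT add_continuous) => // i _.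
apply: cvgM.
  exact: cvg_comp ua (@coord_continuous _ 1 n 0 i a).
exact: cvg_comp wb (@coord_continuous _ 1 n 0 i b).
Qed.

Lemma near_dist_lt (y : V) (c e : R) : 0 <= c -> 0 < e ->
  \forall z \near y, c * `|y - z| < e.
Proof.
move=> c0 e0; have c10 : 0 < c + 1 by rewrite ltr_wpDl.
apply/nbhs_ballP; exists (e / (c + 1)) => /=; first by rewrite divr_gt0.
move=> z; rewrite -ball_normE /= ltr_pdivlMr // => yz.
apply: le_lt_trans yz; have := normr_ge0 (y - z); nra.
Qed.

Definition has_gradient (c : V -> \bar R) (D y : V) : Prop :=
  forall e : R, 0 < e -> \forall z \near y,
    `|fine (c z) - fine (c y) - inner D (z - y)| <= e * `|z - y|.

Lemma has_gradientN (c : V -> \bar R) (D y : V) :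
  has_gradient c D y -> has_gradient (fun z => - c z)%E (- D) y.
Proof.
move=> cD e e0; apply: filterS (cD e e0) => z.
by rewrite !fineN innerNl -!opprD normrN.
Qed.

Lemma has_gradient_cvg (c : V -> \bar R) (D y : V) :
  (\forall z \near y, c z \is a fin_num) -> has_gradient c D y ->
  c z @[z --> y] --> c y.
Proof.
move=> c_fin cD; have cy := nbhs_singleton c_fin.
rewrite -(fineK cy); apply: cvg_EFin c_fin _.
apply/cvgrPdist_lt => e e0; near=> z.
rewrite /= distrC.
have h1 : `|fine (c z) - fine (c y) - inner D (z - y)| <= 1 * `|z - y|.
  by near: z; exact: cD.
have h2 : `|inner D (z - y)| <= n%:R * (`|D| * `|z - y|) := normr_inner_le _ _.
have h3 : (1 + n%:R * `|D|) * `|y - z| < e.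
  by near: z; apply: near_dist_lt => //; rewrite addr_ge0 ?mulr_ge0.
have h4 := ler_normD (fine (c z) - fine (c y) - inner D (z - y)) (inner D (z - y)).
rewrite subrK in h4; rewrite distrC in h3.
nra.
Unshelve. all: by end_near.
Qed.

Lemma frechet_subgradD (k k' c : V -> \bar R) (D y w : V) :
  (\forall z \near y, k' z = k z + c z)%E -> (\forall z \near y, c z \is a fin_num) ->
  has_gradient c D y -> frechet_subgrad k y w -> frechet_subgrad k' y (w + D).
Proof.
move=> k'E c_fin cD [ky kw]; have cy := nbhs_singleton c_fin.
split; first by rewrite (nbhs_singleton k'E) fin_numD ky cy.
move=> e e0; near=> z.
have h1 : (k y + (inner w (z - y) - e / 2 * `|z - y|)%:E <= k z)%E.
  by near: z; apply: kw; rewrite divr_gt0.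
have h2 : `|fine (c z) - fine (c y) - inner D (z - y)| <= e / 2 * `|z - y|.
  by near: z; apply: cD; rewrite divr_gt0.
have cz : c z \is a fin_num by near: z.
rewrite (nbhs_singleton k'E) (near k'E z) //.
rewrite -(fineK ky) -(fineK cy) -(fineK cz) in h1 *.
move: h1 h2; case: (k z) => [r||] //= h1; last by rewrite leey.
rewrite -!EFinD !lee_fin innerDl ler_norml in h1 * => /andP[h2 h3].
lra.
Unshelve. all: by end_near.
Qed.

Lemma lim_subgrad_within (k : V -> \bar R) (S : set V) (x w : V) :
  nbhs x S -> lim_subgrad k x w ->
  exists xs vs : nat -> V, [/\ xs @ \oo --> x, (fun m => k (xs m)) @ \oo --> k x,
    vs @ \oo --> w, forall m, frechet_subgrad k (xs m) (vs m) & forall m, S (xs m)].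
Proof.
move=> Sx [_ [xs [vs [xsx [kxs [vsw kvs]]]]]].
have [N _ SN] : \forall m \near \oo, S (xs m) := xsx _ Sx.
exists (fun m => xs (m + N)%N), (fun m => vs (m + N)%N); split => //.
- by rewrite (cvg_shiftn N xs).
- by rewrite (cvg_shiftn N (k \o xs)).
- by rewrite (cvg_shiftn N vs).
- by move=> m; apply: SN; rewrite /= leq_addl.
Qed.

Lemma lim_subgradD (k k' c : V -> \bar R) (D : V -> V) (S : set V) (x w : V) :
  open S -> S x -> (forall y, S y -> k' y = k y + c y)%E ->
  (forall y, S y -> c y \is a fin_num) -> (forall y, S y -> has_gradient c (D y) y) ->
  {for x, continuous D} -> lim_subgrad k x w -> lim_subgrad k' x (w + D x).
Proof.
move=> So Sx k'E c_fin cD Dx kxw.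
have nearS y : S y -> \forall z \near y, S z by move=> Sy; exact: open_nbhs_nbhs.
have [xs [vs [xsx kxs vsw kvs Sxs]]] := lim_subgrad_within (nearS x Sx) kxw.
have cx : c z @[z --> x] --> c x.
  by apply: has_gradient_cvg (cD x Sx); exact: filterS (nearS x Sx).
split; first by rewrite k'E // fin_numD (c_fin x Sx) andbT; case: kxw.
exists xs, (fun m => vs m + D (xs m)); split=> //; split; last split.
- rewrite k'E // (_ : (fun m => k' (xs m)) = fun m => k (xs m) + c (xs m))%E.
    2: by apply/funext => m; rewrite k'E.
  apply: cvgeD; [exact/fin_num_adde_defl/c_fin | exact: kxs |].
  exact: cvg_comp xsx cx.
- by apply: cvgD => //; exact: cvg_comp xsx Dx.
- move=> m; apply: frechet_subgradD (cD _ (Sxs m)) (kvs m).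
    exact: filterS (fun z => k'E z) (nearS _ (Sxs m)).
  exact: filterS c_fin (nearS _ (Sxs m)).
Qed.

Lemma lim_subgradD_iff (k k' c : V -> \bar R) (D : V -> V) (S : set V) (x v : V) :
  open S -> S x -> (forall y, S y -> k' y = k y + c y)%E ->
  (forall y, S y -> c y \is a fin_num) -> (forall y, S y -> has_gradient c (D y) y) ->
  {for x, continuous D} -> lim_subgrad k' x v <-> lim_subgrad k x (v - D x).
Proof.
move=> So Sx k'E c_fin cD Dx; split => [k'x|kx].
  apply: (lim_subgradD (c := fun y => (- c y)%E) (D := fun y => - D y) So Sx _ _ _ _ k'x).
  - by move=> y Sy; rewrite k'E // addeK // c_fin.
  - by move=> y Sy; rewrite fin_numN c_fin.
  - by move=> y Sy; exact/has_gradientN/cD.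
  - exact: (cvgN Dx).
by rewrite -(subrK (D x) v); exact: (lim_subgradD So Sx k'E c_fin cD Dx kx).
Qed.

Lemma convex_frechet_subgrad_le (h : V -> \bar R) (x y v : V) : convex_fun h ->
  frechet_subgrad h x v -> h y \is a fin_num ->
  fine (h x) + inner v (y - x) <= fine (h y).
Proof.
move=> [_ h_convex] [hx hv] hy; apply/ler_addgt0Pr => e e0.
set a := fine (h x); set b := fine (h y); set d := `|y - x|.
have d0 : 0 <= d := normr_ge0 _.
have d1 : 0 < d + 1 by lra.
set eps := e / (d + 1).
have eps0 : 0 < eps by rewrite divr_gt0.
have epsd : eps * d <= e by rewrite /eps mulrAC ler_pdivrMr //; nra.
have [r /= r0 hr] := (nbhs_ballP _ _).1 (hv eps eps0).
(* [t] is small enough for [z = x + t (y - x)] to lie in the ball where the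
   Fréchet estimate holds *)
set t := r / (2 * (d + r)).
have dr0 : 0 < 2 * (d + r) by nra.
have t0 : 0 < t by rewrite divr_gt0.
have t1 : t < 1 by rewrite /t ltr_pdivrMr //; nra.
set z := t *: y + (1 - t) *: x.
have zx : z - x = t *: (y - x) by apply/rowP => i; rewrite !mxE; ring.
have xz : ball x r z.
  rewrite -ball_normE /= distrC zx normrZ gtr0_norm // /t mulrAC ltr_pdivrMr // -/d; nra.
have := le_trans (hr z xz) (h_convex y x t _); rewrite t0 t1 => /(_ isT).
rewrite zx innerZr normrZ gtr0_norm // -(fineK hx) -(fineK hy) -/a -/b.
rewrite -!EFinM -!EFinD lee_fin -/d => hz.
have : t * (a + inner v (y - x) - eps * d - b) <= 0 by lra.
rewrite pmulr_rle0 //; lra.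
Qed.

Lemma convex_lim_subgrad_le (h : V -> \bar R) (x y v : V) : convex_fun h ->
  lim_subgrad h x v -> h y \is a fin_num ->
  fine (h x) + inner v (y - x) <= fine (h y).
Proof.
move=> h_convex [hx [xs [vs [xsx [hxs [vsv hvs]]]]]] hy.
have lhs_cvg : fine (h (xs m)) + inner (vs m) (y - xs m) @[m --> \oo] -->
    fine (h x) + inner v (y - x).
  apply: cvgD; first by apply: fine_cvg; rewrite fineK.
  by apply: cvg_inner => //; apply: cvgB => //; exact: cvg_cst.
rewrite -(cvg_lim _ lhs_cvg) //; apply: limr_le; first exact: cvgP lhs_cvg.
by near=> m; exact: convex_frechet_subgrad_le.
Unshelve. all: by end_near.
Qed.

Lemma normr_convex_comb_le (x y c : V) (t : R) : 0 <= t <= 1 ->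
  `|c - (t *: x + (1 - t) *: y)| <= t * `|c - x| + (1 - t) * `|c - y|.
Proof.
move=> /andP[t0 t1].
have -> : c - (t *: x + (1 - t) *: y) = t *: (c - x) + (1 - t) *: (c - y).
  by apply/rowP => i; rewrite !mxE; ring.
apply: le_trans (ler_normD _ _) _.
by rewrite !normrZ (ger0_norm t0) ger0_norm // subr_ge0.
Qed.

Lemma convex_set_ball (c : V) (r : R) : Defs.convex_set (ball c r).
Proof.
move=> x y t; rewrite -ball_normE /= => cx cy t01.
apply: le_lt_trans (normr_convex_comb_le _ _ _ t01) _.
move: t01 => /andP[t0 t1].
have [xy|yx] := leP `|c - x| `|c - y|; nra.
Qed.

Lemma convex_set_closed_ball (c : V) (r : R) : 0 < r -> Defs.convex_set (closed_ball c r).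
Proof.
move=> r0 x y t; rewrite closed_ballE // /closed_ball_ /= => cx cy t01.
apply: le_trans (normr_convex_comb_le _ _ _ t01) _.
move: t01 => /andP[t0 t1].
have [xy|yx] := leP `|c - x| `|c - y|; nra.
Qed.

Local Open Scope ereal_scope.

Lemma convex_funD (h c : V -> \bar R) :
  convex_fun h -> convex_fun c -> convex_fun (fun y => h y + c y).
Proof.
have def_Nyneq (a b : \bar R) : a != -oo -> b != -oo -> a +? b by case: a; case: b.
move=> [hNy h_convex] [cNy c_convex]; split => [y|x y t t01].
  by rewrite adde_eq_ninfty negb_or hNy cNy.
rewrite muleDr ?def_Nyneq // muleDr ?def_Nyneq // addeACA.
by apply: leeD; [exact: h_convex | exact: c_convex].
Qed.

Definition restr_pinfty (B : set V) (h : V -> \bar R) : V -> \bar R :=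
  fun y => if `[< B y >] then h y else +oo.

Lemma restr_pinftyT (B : set V) h y : B y -> restr_pinfty B h y = h y.
Proof. by move=> By; rewrite /restr_pinfty asboolT. Qed.

Lemma convex_fun_restr_pinfty (B : set V) (h : V -> \bar R) :
  Defs.convex_set B -> convex_fun h -> convex_fun (restr_pinfty B h).
Proof.
move=> B_convex [hNy h_convex]; split => [y|x y t /andP[t0 t1]].
  by rewrite /restr_pinfty; case: ifP.
have mul_pinfty (s : R) : (0 < s)%R -> s%:E * +oo = +oo by move=> s0; rewrite gt0_muley.
have mul_Nyneq (s : R) a : (0 < s)%R -> a != -oo -> s%:E * a != -oo.
  by case: a => [a||] //= s0 _; rewrite gt0_muley.
have t1' : (0 < 1 - t)%R by rewrite subr_gt0.
have restrNy z : restr_pinfty B h z != -oo by rewrite /restr_pinfty; case: ifP.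
have [Bx|nBx] := asboolP (B x); last first.
  rewrite [restr_pinfty B h x]/restr_pinfty asboolF // mul_pinfty //.
  by rewrite addye ?leey ?mul_Nyneq.
have [By|nBy] := asboolP (B y); last first.
  rewrite [restr_pinfty B h y]/restr_pinfty asboolF // mul_pinfty //.
  by rewrite addey ?leey ?mul_Nyneq.
rewrite !restr_pinftyT //; first by apply: h_convex; rewrite t0 t1.
by apply: B_convex; rewrite ?ltW.
Qed.

Definition lsc_at (h : V -> \bar R) (x : V) : Prop :=
  forall a : R, a%:E < h x -> \forall y \near x, a%:E < h y.

Lemma lsc_atD (h c : V -> \bar R) (x : V) : lsc_at h x -> c x \is a fin_num ->
  c y @[y --> x] --> c x -> lsc_at (fun y => h y + c y) x.
Proof.
move=> hx cx c_cvg a; rewrite -(fineK cx); set b := fine (c x) => ahc.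
have [d d0 hd] : exists2 d : R, (0 < d)%R & (a - b + d + d)%:E < h x.
  move: ahc; case: (h x) => [p||] //=; last by exists 1%R; rewrite ?ltey.
  rewrite -EFinD lte_fin => abp; exists ((p + b - a) / 3)%R.
    by rewrite divr_gt0 // subr_gt0.
  rewrite lte_fin; lra.
have hx' : (a - b + d)%:E < h x by apply: lt_trans hd; rewrite lte_fin; lra.
rewrite -(fineK cx) -/b in c_cvg; have [c_fin fc_cvg] := (fine_cvgP _ _).1 c_cvg.
near=> y.
have h1 : (a - b + d)%:E < h y by near: y; exact: hx.
have cy : c y \is a fin_num by near: y.
have h2 : (`|b - fine (c y)| < d)%R.
  by near: y; exact: (@cvgr_dist_lt _ _ _ _ (nbhs_filter x) _ _ fc_cvg _ d0).
rewrite -(fineK cy); move: h1; case: (h y) => [p||] //=; last by rewrite addye ?ltey.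
rewrite -EFinD !lte_fin => h1; move: h2; rewrite ltr_norml => /andP[h2 h3].
lra.
Unshelve. all: by end_near.
Qed.

Lemma lsc_restr_pinfty (B : set V) (h : V -> \bar R) : closed B ->
  (forall x, B x -> lsc_at h x) -> lsc (restr_pinfty B h).
Proof.
move=> B_closed hB x a; rewrite /restr_pinfty; case: (asboolP (B x)) => [Bx|nBx] ax.
  by apply: filterS (hB x Bx a ax) => y hy; case: ifP; rewrite ?ltey.
have : \forall y \near x, ~ B y.
  by apply: open_nbhs_nbhs; split => //; exact: closed_openC.
by apply: filterS => y nBy; rewrite asboolF // ltey.
Qed.

End Subgradients.

Section VarConvexSum.
Variables (R : realType) (n : nat).
Notation V := 'rV[R]_n.
Variables (f g phi : V -> \bar R) (G : V -> V) (xbar vbar : V).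
Variables (U U0 W0 : set V) (eps rho : R).
Hypotheses (fxbar_fin : f xbar \is a fin_num) (g_convex : convex_fun g).
Hypotheses (U_open : open U) (U_xbar : U xbar).
Hypotheses (g_fin : forall x, U x -> g x \is a fin_num)
  (g_grad : forall x, U x -> has_gradient g (G x) x)
  (G_cont : forall x, U x -> {for x, continuous G}).
Hypotheses (f_subgrad : lim_subgrad f xbar vbar)
  (U0_nbhs : nbhs xbar U0) (rho_gt0 : 0 < rho) (W0_ball : ball vbar rho `<=` W0)
  (phi_lsc : lsc phi) (phi_convex : convex_fun phi)
  (phi_le : forall x, U0 x -> (phi x <= f x)%E) (eps_gt0 : 0 < eps).
Hypothesis f_phi_subgrad : forall x v,
  (U0 x /\ (f x < f xbar + eps%:E)%E /\ W0 v /\ lim_subgrad f x v) <->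
  (U0 x /\ W0 v /\ lim_subgrad phi x v).
Hypothesis f_phi_eq :
  forall x v, U0 x -> W0 v -> lim_subgrad phi x v -> f x = phi x.

Local Notation fg := (fun x => f x + g x)%E.

Lemma lim_subgrad_fg x v : U x -> lim_subgrad fg x v <-> lim_subgrad f x (v - G x).
Proof.
by move=> Ux; exact: (lim_subgradD_iff v U_open Ux (fun _ _ => erefl) g_fin g_grad
  (G_cont Ux)).
Qed.

Lemma g_cvg x : U x -> g y @[y --> x] --> g x.
Proof.
move=> Ux; apply: has_gradient_cvg (g_grad Ux).
by apply: filterS g_fin _; apply: open_nbhs_nbhs.
Qed.

Lemma f_phi_xbar : f xbar = phi xbar.
Proof.
have U0_xbar := nbhs_singleton U0_nbhs.
have W0_vbar : W0 vbar by apply: W0_ball; exact: ballxx.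
have f_level : (f xbar < f xbar + eps%:E)%E.
  by rewrite -(fineK fxbar_fin) -EFinD lte_fin ltrDl.
have [_ [_ phi_subgrad]] := (f_phi_subgrad xbar vbar).1
  (conj U0_xbar (conj f_level (conj W0_vbar f_subgrad))).
exact: f_phi_eq phi_subgrad.
Qed.

(* the last bound makes [<w, xbar - x>] small for every [w] in [ball vbar rho] *)
Definition good_point (x : V) : Prop :=
  [/\ U0 x, U x, `|G xbar - G x| < rho / 2,
    `|fine (g xbar) - fine (g x)| < eps / 4
    & n%:R * (`|vbar| + rho) * `|xbar - x| < eps / 4].

Lemma exists_good_radius : exists2 r, 0 < r & closed_ball xbar r `<=` good_point.
Proof.
have := g_cvg U_xbar; rewrite -(fineK (g_fin U_xbar)) => /fine_cvgP[_ g_fcvg].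
have : \forall x \near xbar, good_point x.
  near=> x; split; near: x.
  - exact: U0_nbhs.
  - exact: open_nbhs_nbhs.
  - apply: (@cvgr_dist_lt _ _ _ _ (nbhs_filter xbar) _ _ (G_cont U_xbar)).
    by rewrite divr_gt0.
  - apply: (@cvgr_dist_lt _ _ _ _ (nbhs_filter xbar) _ _ g_fcvg).
    by rewrite divr_gt0.
  - by apply: near_dist_lt; rewrite ?divr_gt0 // mulr_ge0 // addr_ge0 // ltW.
move=> /nbhs_ballP[r r_gt0 hr]; exists (r / 2); first by rewrite divr_gt0.
by move=> x /(subset_closure_half r_gt0)/hr.
Unshelve. all: by end_near.
Qed.

Section AtGoodRadius.
Variable r : R.
Hypotheses (r_gt0 : 0 < r) (r_good : closed_ball xbar r `<=` good_point).

Local Notation B := (closed_ball xbar r).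
Local Notation phi_r := (restr_pinfty B (fun x => phi x + g x)%E).

Lemma ball_good x : ball xbar r x -> [/\ B x, U0 x & U x].
Proof. by move=> /subset_closed_ball Bx; have [] := r_good Bx. Qed.

Lemma subgrad_shift_ball x v : B x -> ball (vbar + G xbar) (rho / 2) v ->
  ball vbar rho (v - G x).
Proof.
move=> Bx; have [_ _ Gx _ _] := r_good Bx; rewrite -!ball_normE /= => vv.
have -> : vbar - (v - G x) = (vbar + G xbar - v) + (G x - G xbar).
  by apply/rowP => i; rewrite !mxE; ring.
rewrite distrC in Gx; apply: le_lt_trans (ler_normD _ _) _; lra.
Qed.

Lemma lim_subgrad_phi_r x v : ball xbar r x ->
  lim_subgrad phi_r x v <-> lim_subgrad phi x (v - G x).
Proof.
move=> xr; apply: (lim_subgradD_iff v (ball_open _ _) xr).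
- by move=> y /ball_good[By _ _]; rewrite restr_pinftyT.
- by move=> y /ball_good[_ _ Uy]; exact: g_fin.
- by move=> y /ball_good[_ _ Uy]; exact: g_grad.
- by have [_ _ Ux] := ball_good xr; exact: G_cont.
Qed.

Lemma f_level_of_fg_level x : B x ->
  (fg x < fg xbar + (eps / 2)%:E)%E -> (f x < f xbar + eps%:E)%E.
Proof.
move=> Bx; have [_ Ux _ gx _] := r_good Bx.
rewrite -(fineK fxbar_fin) -(fineK (g_fin Ux)) -(fineK (g_fin U_xbar)).
case: (f x) => [p||] //=; last by move=> _; rewrite -EFinD ltNyr.
rewrite -!EFinD !lte_fin; move: gx; rewrite ltr_norml => /andP[gx1 gx2].
lra.
Qed.

Lemma fg_level_of_phi_subgrad x w : B x -> ball vbar rho w -> lim_subgrad phi x w ->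
  (fg x < fg xbar + (eps / 2)%:E)%E.
Proof.
move=> Bx ww phixw; have [U0x Ux _ gx close] := r_good Bx.
rewrite (f_phi_eq U0x (W0_ball ww) phixw) f_phi_xbar.
have phix_fin : phi x \is a fin_num by case: phixw.
have phixbar_fin : phi xbar \is a fin_num by rewrite -f_phi_xbar.
have sub_ineq := convex_lim_subgrad_le phi_convex phixw phixbar_fin.
have w_le : `|w| <= `|vbar| + rho.
  have := ler_distD vbar w 0; rewrite !subr0 -ball_normE /= in ww *.
  by rewrite distrC; lra.
have inner_le : `|inner w (xbar - x)| <= eps / 4.
  apply: le_trans (normr_inner_le _ _) _; rewrite mulrA.
  apply: le_trans (ltW close); apply: ler_wpM2r => //.
  by apply: ler_wpM2l.
rewrite -(fineK phix_fin) -(fineK (g_fin Ux)) -(fineK phixbar_fin).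
rewrite -(fineK (g_fin U_xbar)).
rewrite -!EFinD lte_fin; move: gx inner_le; rewrite !ler_norml ltr_norml.
move=> /andP[gx1 gx2] /andP[i1 i2]; lra.
Qed.

Lemma fg_phi_r_subgrad_iff x v :
  ball xbar r x /\ (fg x < fg xbar + (eps / 2)%:E)%E /\
    ball (vbar + G xbar) (rho / 2) v /\ lim_subgrad fg x v <->
  ball xbar r x /\ ball (vbar + G xbar) (rho / 2) v /\ lim_subgrad phi_r x v.
Proof.
split=> [[xr [fg_level [vv fg_subgrad]]] | [xr [vv phi_r_subgrad]]];
  have [Bx U0x Ux] := ball_good xr; have W0w := W0_ball (subgrad_shift_ball Bx vv).
- have f_subgrad_x := (lim_subgrad_fg v Ux).1 fg_subgrad.
  have [_ [_ phi_subgrad]] := (f_phi_subgrad x (v - G x)).1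
    (conj U0x (conj (f_level_of_fg_level Bx fg_level) (conj W0w f_subgrad_x))).
  by split => //; split => //; apply/lim_subgrad_phi_r.
- have phi_subgrad := (lim_subgrad_phi_r v xr).1 phi_r_subgrad.
  have [_ [_ [_ f_subgrad_x]]] := (f_phi_subgrad x (v - G x)).2
    (conj U0x (conj W0w phi_subgrad)).
  split => //; split.
    exact: fg_level_of_phi_subgrad (subgrad_shift_ball Bx vv) phi_subgrad.
  by split => //; apply/lim_subgrad_fg.
Qed.

Lemma var_convex_fg_at_good_radius : var_convex fg xbar (vbar + G xbar).
Proof.
split; first by apply/(lim_subgrad_fg _ U_xbar); rewrite addrK.
exists (ball xbar r), (ball (vbar + G xbar) (rho / 2)), phi_r, (eps / 2).
split; first exact: convex_set_ball.
split; first exact: convex_set_ball.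
split; first exact: nbhsx_ballx.
split; first by apply: nbhsx_ballx; rewrite divr_gt0.
split.
  apply: lsc_restr_pinfty => [|x /r_good[_ Ux _ _ _]]; first exact: closed_ball_closed.
  exact: (lsc_atD (@phi_lsc x) (g_fin Ux) (g_cvg Ux)).
split.
  apply: convex_fun_restr_pinfty; first exact: convex_set_closed_ball.
  exact: convex_funD.
split.
  move=> x /ball_good[Bx U0x _]; rewrite restr_pinftyT //.
  by apply: leeD2r; exact: phi_le.
split; first by rewrite divr_gt0.
split; first exact: fg_phi_r_subgrad_iff.
move=> x v xr vv /(lim_subgrad_phi_r v xr) phi_subgrad.
have [Bx U0x _] := ball_good xr.
rewrite restr_pinftyT //; congr (_ + _)%E.
exact: f_phi_eq (W0_ball (subgrad_shift_ball Bx vv)) phi_subgrad.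
Qed.

End AtGoodRadius.

Lemma var_convex_fg : var_convex fg xbar (vbar + G xbar).
Proof.
have [r r_gt0 r_good] := exists_good_radius.
exact: (var_convex_fg_at_good_radius r_gt0 r_good).
Qed.

End VarConvexSum.

Theorem mainTheorem17 (R : realType) (n : nat)
  (f g : 'rV[R]_n -> \bar R) (xbar vbar : 'rV[R]_n)
  (U : set 'rV[R]_n) (G : 'rV[R]_n -> 'rV[R]_n) :
  proper_fun f -> lsc f -> f xbar \is a fin_num ->
  convex_fun g ->
  open U -> U xbar -> C1_on_with_grad U g G ->
  var_convex f xbar vbar ->
  var_convex (fun x => (f x + g x)%E) xbar (vbar + G xbar).
Proof.
move=> _ _ fxbar_fin g_convex U_open U_xbar [g_fin [g_grad G_cont]]
  [f_subgrad [U0 [W0 [phi [eps [_ [_ [U0_nbhs [W0_nbhs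
  [phi_lsc [phi_convex [phi_le [eps_gt0 [f_phi_subgrad f_phi_eq]]]]]]]]]]]]]].
have [rho rho_gt0 W0_ball] := (nbhs_ballP _ _).1 W0_nbhs.
exact: (var_convex_fg fxbar_fin g_convex U_open U_xbar g_fin g_grad G_cont
  f_subgrad U0_nbhs rho_gt0 W0_ball phi_lsc phi_convex phi_le eps_gt0
  f_phi_subgrad f_phi_eq).
Qed.
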